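(* Assume the standing setting below. Let $\alpha\in(0,1/6]$ with $\alpha n$ an integer, let $P_1\subseteq X$ with $|P_1|=\alpha n$, let $\beta\ge1$, and let $T_\alpha\subseteq P_1$ with $|T_\alpha|\le k_+$ satisfy $R(P_1,T_\alpha)\le\beta\min\{R(P_1,T):T\subseteq P_1,|T|\le k_+\}$. Let $\mathcal{B}_a$ be a $(\phi_\alpha/15)$-linear bin division of $X$ with respect to $\mathrm{OPT}$. Suppose $\mathcal{B}_a$ is trivial or well-represented in $P_1$ for $X$, and that for every $i$ with $|C_i^*|\ge\phi_\alpha$, $C_i^*$ is well-represented in $P_1$ for $X$. Then $$R(X^\alpha_{\mathrm{large}},T_\alpha)\le(18\beta+10)\,R(X,\mathrm{OPT}).$$
   Context: Standing setting: $(X,\rho)$ is a finite metric space with $|X|=n$; $k\ge 2$ is an integer and $\delta\in(0,1)$; $\log$ is the natural logarithm; $k_+:=k+38\log(32k/\delta)$. For nonempty $T\subseteq X$, $\rho(x,T):=\min_{y\in T}\rho(x,y)$ and $R(S,T):=\sum_{x\in S}\rho(x,T)$; ties are broken by a fixed ordering. $\mathrm{OPT}=\{c_1^*,\ldots,c_k^*\}$ is a set of at most $k$ points of $X$ minimizing $R(X,\cdot)$, and $C_i^*:=\{x\in X: i=\arg\min_{j\in[k]}\rho(c_j^*,x)\}$. For $\alpha>0$, $\phi_\alpha:=150\log(32k/\delta)/\alpha$; $X^\alpha_{\mathrm{large}}:=\bigcup\{C_i^*:|C_i^*|\ge\phi_\alpha\}$. For finite $W$, $A,B\subseteq W$, $B$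 is well-represented in $A$ for $W$ if $|B\cap A|/|B|\in[r/2,\frac32 r]$ with $r=|A|/|W|$; a bin division is well-represented if all its bins are. A $z$-linear bin division ($z>0$) of $W$ with respect to $T$ is a partition $(\mathcal{B}(1),\ldots,\mathcal{B}(L))$ of $W$ with: (1) if $z\le|W|$, $|\mathcal{B}(i)|\ge z(i+1)/2$ for all $i$; otherwise it is trivial, $\mathcal{B}(1):=W$; (2) $|\mathcal{B}(1)|\le\frac52 z$; (3) $|\mathcal{B}(i+1)|/|\mathcal{B}(i)|\le3/2$; (4) $\rho(x,T)\ge\rho(x',T)$ whenever $x\in\mathcal{B}(i)$, $x'\in\mathcal{B}(i+1)$. *)

From HB Require Import structures.
From mathcomp Require Import all_boot all_order all_algebra.
From mathcomp Require Import reals exp.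

Set Implicit Arguments.
Unset Strict Implicit.
Unset Printing Implicit Defensive.

Import Order.TTheory GRing.Theory Num.Theory.
Local Open Scope ring_scope.

Section Defs.
Variables (R : realType) (T : finType).
Implicit Types (rho : T -> T -> R) (A B W S : {set T}).

(* (X, rho) is a metric space (X is the whole finite type T). *)
Definition is_metric rho : Prop :=
  [/\ forall x y, 0 <= rho x y,
      forall x y, rho x y = 0 <-> x = y,
      forall x y, rho x y = rho y x &
      forall x y z, rho x z <= rho x y + rho y z].

(* rho(x,S) = min_{y in S} rho x y for nonempty S (0 by convention if S = set0;
   the empty set never occurs where this matters). *)
Definition distS rho (x : T) S : R :=
  match [pick y in S] with
  | Some y0 => \big[Num.min/rho x y0]_(y in S) rho x y
  | None => 0
  end.

Definition cost rho S S' : R := \sum_(x in S) distS rho x S'.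

Definition kplus (k : nat) (delta : R) : R :=
  k%:R + 38 * ln (32 * k%:R / delta).

Definition phi (k : nat) (delta alpha : R) : R :=
  150 * ln (32 * k%:R / delta) / alpha.

Definition centers (k : nat) (c : 'I_k -> T) : {set T} := [set c j | j : 'I_k].

(* C_i^* = {x : i = argmin_j rho(c_j, x)}, ties broken toward the smallest
   index. *)
Definition cluster rho (k : nat) (c : 'I_k -> T) (i : 'I_k) : {set T} :=
  [set x | [forall j : 'I_k,
              (rho (c i) x <= rho (c j) x) &&
              ((j < i)%N ==> (rho (c i) x < rho (c j) x))]].

Definition Xlarge rho (k : nat) (c : 'I_k -> T) (ph : R) : {set T} :=
  \bigcup_(i : 'I_k | ph <= #|cluster rho c i|%:R) cluster rho c i.

Definition well_rep W A B : Prop :=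
  let r := #|A|%:R / #|W|%:R : R in
  r / 2 <= #|B :&: A|%:R / #|B|%:R <= 3 / 2 * r.

Definition linear_bin_division rho (z : R) W S (L : nat) (B : nat -> {set T})
  : Prop :=
  [/\
      (forall i, (1 <= i <= L)%N -> B i \subset W) /\
      (forall x, x \in W -> exists2 i, (1 <= i <= L)%N & x \in B i) /\
      (forall i j, (1 <= i <= L)%N -> (1 <= j <= L)%N -> i != j ->
         [disjoint B i & B j]),
      (* (1) *)
      (if z <= #|W|%:R then
         forall i, (1 <= i <= L)%N -> z * (i.+1)%:R / 2 <= #|B i|%:R
       else L = 1%N /\ B 1%N = W),
      (* (2) *)
      #|B 1%N|%:R <= 5 / 2 * z,
      (forall i, (1 <= i < L)%N -> #|B i.+1|%:R / #|B i|%:R <= 3 / 2 :> R) &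
      (forall i x x', (1 <= i < L)%N -> x \in B i -> x' \in B i.+1 ->
         distS rho x' S <= distS rho x S)].

Definition trivial_bins W (L : nat) (B : nat -> {set T}) : Prop :=
  L = 1%N /\ B 1%N = W.

Definition well_rep_bins W A (L : nat) (B : nat -> {set T}) : Prop :=
  forall i, (1 <= i <= L)%N -> well_rep W A (B i).

End Defs.

(* Let D(x) = rho(x, OPT) and Delta = R(X, OPT), r = |P1|/|X| = alpha.
   - Bins: consecutive bins of the linear bin division grow by at most 3/2
     and get farther from OPT, so the sample points of bin i+1 weigh at most
     9/4 alpha times bin i; summing, the sample outside the first bin, A, has
     D-weight at most 9/4 alpha Delta ([tail_sample_weight]).  By (2) the
     first bin contains at most alpha phi_alpha / 4 sample points.
   - Seeding: the nearest sample points to the k centers, plus the sample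
     points of the first bin, form a candidate of size <= k_+ costing at most
     2 * 9/4 alpha Delta on P1; by beta-optimality R(P1, Ta) <= 9/2 beta alpha
     Delta ([seeded_solution]).
   - Clusters: a large cluster C keeps >= alpha |C| / 4 of its sample in A;
     every x in C reaches Ta through any such sample point y at price
     D(x) + D(y) + rho(y, Ta) ([cost_by_sample]); summing over the disjoint
     large clusters gives (18 beta + 10) Delta ([large_clusters_cost]). *)
From mathcomp Require Import all_boot all_order all_algebra.
From mathcomp Require Import reals exp.
From mathcomp Require Import ring lra zify.
Set Implicit Arguments.
Unset Strict Implicit.
Unset Printing Implicit Defensive.

Import Order.TTheory GRing.Theory Num.Theory.
Local Open Scope ring_scope.

Section Sums.
Variables (R : realDomainType) (T : finType).
Implicit Types (A B : {set T}) (f : T -> R).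

Lemma sum_le_subset A B f : (forall x, 0 <= f x) -> A \subset B ->
  \sum_(x in A) f x <= \sum_(x in B) f x.
Proof.
move=> f0 AB; rewrite [leRHS](big_setID A) /= (setIidPr AB) lerDl.
exact: sumr_ge0.
Qed.

Lemma sum_disjoint_bigcup (I : finType) (K : pred I) (F : I -> {set T}) f :
  (forall i j, K i -> K j -> i != j -> [disjoint F i & F j]) ->
  \sum_(x in \bigcup_(i | K i) F i) f x = \sum_(i | K i) \sum_(x in F i) f x.
Proof.
move=> disjF; pose G i := if K i then F i else set0.
have disjG i j : i != j -> [disjoint G i & G j].
  rewrite /G -!setI_eq0; case Ki: (K i); case Kj: (K j) => ij;
  by rewrite ?set0I ?setI0 // setI_eq0 disjF.
rewrite (big_mkcond K) -/G (partition_disjoint_bigcup _ _ disjG) [RHS]big_mkcond.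
by apply: eq_bigr => i _; rewrite /G; case: (K i); rewrite ?big_set0.
Qed.

Lemma sum_mul_card_le A B f :
  (forall x y, x \in A -> y \in B -> f x <= f y) ->
  (\sum_(x in A) f x) * #|B|%:R <= #|A|%:R * \sum_(y in B) f y.
Proof.
move=> fAB; rewrite mulr_suml mulr_natl -(sumr_const (mem A)); apply: ler_sum => x xA.
by rewrite mulr_natr -(sumr_const (mem B)); apply: ler_sum => y yB; apply: fAB.
Qed.

End Sums.

Section WellRepresented.
Variables (R : realType) (T : finType).
Implicit Types (W P C : {set T}).

Lemma well_rep_card_ub W P C : well_rep R W P C ->
  #|C :&: P|%:R <= 3/2 * (#|P|%:R / #|W|%:R) * #|C|%:R :> R.
Proof.
rewrite /well_rep /= => /andP[_ ub]; have [C0|Cpos] := posnP #|C|.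
  by move: (subset_leq_card (subsetIl C P)); rewrite C0 leqn0 => /eqP ->; rewrite mulr0.
by rewrite -ler_pdivrMr // ltr0n.
Qed.

Lemma well_rep_card_lb W P C : well_rep R W P C ->
  (#|P|%:R / #|W|%:R) / 2 * #|C|%:R <= #|C :&: P|%:R :> R.
Proof.
rewrite /well_rep /= => /andP[lb _]; have [C0|Cpos] := posnP #|C|.
  by rewrite C0 mulr0.
by rewrite -ler_pdivlMr // ltr0n.
Qed.

Lemma well_rep_sample_outside W P C B :
  well_rep R W P C ->
  #|B :&: P|%:R <= (#|P|%:R / #|W|%:R) / 4 * #|C|%:R :> R ->
  (#|P|%:R / #|W|%:R) * #|C|%:R <= 4 * #|C :&: (P :\: B)|%:R :> R.
Proof.
move=> /well_rep_card_lb lb smallB.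
have split_sample : (#|C :&: P| <= #|C :&: (P :\: B)| + #|B :&: P|)%N.
  apply: leq_trans (leq_card_setU _ _).1; apply: subset_leq_card.
  by apply/subsetP => x; rewrite !inE => /andP[-> ->]; case: (x \in B).
move: split_sample; rewrite -(ler_nat R) natrD; lra.
Qed.

End WellRepresented.

Section Constants.
Variable R : realType.

Lemma log_term_gt0 (k : nat) (delta : R) : (2 <= k)%N -> 0 < delta < 1 ->
  0 < ln (32 * k%:R / delta).
Proof.
move=> k2 /andP[d0 d1]; apply: ln_gt0; rewrite ltr_pdivlMr // mul1r.
apply: lt_trans d1 _; rewrite (_ : 1 = 1%:R) // -natrM ltr_nat.
by apply: leq_trans k2 _; rewrite leq_pmull.
Qed.

Lemma alpha_phi (k : nat) (delta alpha : R) : alpha != 0 ->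
  alpha * phi k delta alpha = 150 * ln (32 * k%:R / delta).
Proof. by move=> a0; rewrite /phi mulrC divfK. Qed.

Lemma card_le_kplus (k s m : nat) (delta alpha : R) :
  0 < alpha -> 0 < ln (32 * k%:R / delta) ->
  (s <= k + m)%N -> m%:R <= alpha * phi k delta alpha / 4 ->
  s%:R <= kplus k delta.
Proof.
move=> a0 lnpos skm; rewrite alpha_phi ?lt0r_neq0 // /kplus => mle.
move: skm; rewrite -(ler_nat R) natrD; lra.
Qed.

End Constants.

Section Metric.
Variables (R : realType) (T : finType) (rho : T -> T -> R).
Hypothesis rho_metric : is_metric rho.
Implicit Types (x y : T) (S P A C Q Cs : {set T}).

Lemma rho_ge0 x y : 0 <= rho x y. Proof. by case: rho_metric. Qed.
Lemma rho_xx x : rho x x = 0. Proof. by case: rho_metric => _ self0 _ _; apply/self0. Qed.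
Lemma rho_sym x y : rho x y = rho y x. Proof. by case: rho_metric. Qed.
Lemma rho_triangle x y z : rho x z <= rho x y + rho y z.
Proof. by case: rho_metric. Qed.

Lemma distS_ge0 x S : 0 <= distS rho x S.
Proof.
rewrite /distS; case: pickP => [y0 _|_] //.
apply: (big_ind (fun v => 0 <= v)) => [|a b a0 b0|y _]; last exact: rho_ge0.
  exact: rho_ge0.
by rewrite le_min a0 b0.
Qed.

Lemma distS_le x {S y} : y \in S -> distS rho x S <= rho x y.
Proof.
move=> yS; rewrite /distS; case: pickP => [y0 _|S0]; last by rewrite S0 in yS.
by rewrite (bigD1 y) //= ge_min lexx.
Qed.

Lemma distS_attained x {S} : S != set0 -> exists2 y, y \in S & distS rho x S = rho x y.
Proof.
move=> /set0Pn [y1 y1S]; rewrite /distS; case: pickP => [y0 y0S|S0]; last by rewrite S0 in y1S.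
apply: (big_ind (fun v => exists2 y, y \in S & v = rho x y)) => [|a b|y yS].
- by exists y0.
- move=> [ya yaS ->] [yb ybS ->]; have [ab|ba] := leP (rho x ya) (rho x yb).
    by exists ya; rewrite ?min_l.
  by exists yb; rewrite ?min_r ?ltW.
- by exists y.
Qed.

Lemma distS_member x S : x \in S -> distS rho x S = 0.
Proof. by move=> xS; apply/eqP; rewrite eq_le distS_ge0 -(rho_xx x) distS_le. Qed.

Lemma distS_triangle x y S : distS rho x S <= rho x y + distS rho y S.
Proof.
have [->|S0] := eqVneq S set0.
  by rewrite /distS; case: pickP => [? |_]; rewrite ?inE ?addr0 ?rho_ge0.
have [y' y'S ->] := distS_attained y S0.
exact: le_trans (distS_le x y'S) (rho_triangle _ _ _).
Qed.

Lemma distS_subset x S S' : S != set0 -> S \subset S' ->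
  distS rho x S' <= distS rho x S.
Proof.
move=> S0 SS'; have [y yS ->] := distS_attained x S0.
by apply: distS_le; apply: (subsetP SS').
Qed.

Lemma cost_ge0 P S : 0 <= cost rho P S.
Proof. by apply: sumr_ge0 => x _; apply: distS_ge0. Qed.

Lemma cost_le_subset P P' S : P \subset P' -> cost rho P S <= cost rho P' S.
Proof. by apply: sum_le_subset => x; apply: distS_ge0. Qed.

Lemma nearest_projection {P Cs} : P != set0 -> Cs != set0 ->
  exists S, [/\ S \subset P, S != set0, (#|S| <= #|Cs|)%N &
    forall x, x \in P -> distS rho x S <= 2 * distS rho x Cs].
Proof.
move=> P0 Cs0.
have [f fP] : exists f : T -> T,
    forall c, f c \in P /\ forall y, y \in P -> rho c (f c) <= rho c y.
  apply: (@fin_all_exists T (fun=> T)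
    (fun c y => y \in P /\ forall y', y' \in P -> rho c y <= rho c y')) => c.
  have [y yP dy] := distS_attained c P0.
  by exists y; split=> // y' y'P; rewrite -dy distS_le.
exists (f @: Cs); split.
- by apply/subsetP => _ /imsetP[c _ ->]; case: (fP c).
- by have /set0Pn[c cCs] := Cs0; apply/set0Pn; exists (f c); apply: imset_f.
- exact: leq_imset_card.
move=> x xP; have [c cCs ->] := distS_attained x Cs0.
apply: le_trans (distS_le x (imset_f f cCs)) _.
apply: le_trans (rho_triangle x c (f c)) _.
have := (fP c).2 x xP; rewrite (rho_sym c x); lra.
Qed.

Lemma cost_add_points P A {S} : S != set0 ->
  cost rho P (S :|: (A :&: P)) <= \sum_(x in P :\: A) distS rho x S.
Proof.
move=> S0; rewrite /cost (big_setID A) /= big1 ?add0r => [|x]; last first.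
  by rewrite inE => /andP[xA xP]; apply: distS_member; rewrite !inE xA xP orbT.
by apply: ler_sum => x _; apply: distS_subset => //; apply: subsetUl.
Qed.

Lemma seeded_solution P A Cs : P != set0 -> Cs != set0 ->
  exists S, [/\ S \subset P, S != set0, (#|S| <= #|Cs| + #|A :&: P|)%N &
    cost rho P S <= 2 * \sum_(x in P :\: A) distS rho x Cs].
Proof.
move=> P0 Cs0; have [S [SP S0 ScardS Snear]] := nearest_projection P0 Cs0.
exists (S :|: (A :&: P)); split.
- by rewrite subUset SP subsetIr.
- by apply: contraNneq S0 => /eqP; rewrite setU_eq0 => /andP[].
- by apply: leq_trans (leq_card_setU _ _).1 _; rewrite leq_add2r.
apply: le_trans (cost_add_points P A S0) _; rewrite mulr_sumr.
by apply: ler_sum => x; rewrite inE => /andP[_ /Snear].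
Qed.

(* Bounding the cost of C through a sample Q of C: every x in C reaches S via
   any y in Q, at price d x + d y + rho(y, S). *)
Lemma cost_by_sample C Q S (d : T -> R) (s : R) :
  (forall x, 0 <= d x) ->
  (forall x y, x \in C -> y \in Q -> rho x y <= d x + d y) ->
  0 < s -> s * #|C|%:R <= #|Q|%:R ->
  cost rho C S <= \sum_(x in C) d x + s^-1 * \sum_(y in Q) (d y + distS rho y S).
Proof.
move=> d0 dCQ s0 sCQ; set w := \sum_(y in Q) _.
have w0 : 0 <= w by apply: sumr_ge0 => y _; rewrite addr_ge0 ?distS_ge0.
have [Q0|Qpos] := posnP #|Q|.
  move: sCQ; rewrite Q0 pmulr_rle0 // lern0 => /eqP /cards0_eq ->.
  by rewrite /cost !big_set0 add0r mulr_ge0 // invr_ge0 ltW.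
have via_sample x : x \in C -> #|Q|%:R * distS rho x S <= #|Q|%:R * d x + w.
  move=> xC; rewrite !mulr_natl -!(sumr_const (mem Q)) -big_split /=.
  apply: ler_sum => y yQ; apply: le_trans (distS_triangle x y S) _.
  by rewrite addrA lerD2r dCQ.
have summed : #|Q|%:R * cost rho C S <= #|Q|%:R * \sum_(x in C) d x + #|C|%:R * w.
  rewrite /cost [_ * w]mulr_natl -(sumr_const (mem C)) !mulr_sumr -big_split.
  by apply: ler_sum => x /via_sample.
have Qpos' : (0 : R) < #|Q|%:R by rewrite ltr0n.
rewrite -(ler_pM2l Qpos') mulrDr; apply: le_trans summed _; rewrite lerD2l.
by rewrite mulrA ler_wpM2r // ler_pdivlMr // mulrC.
Qed.

Lemma centers_mem {k} (c : 'I_k -> T) i : c i \in centers c.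
Proof. exact: imset_f. Qed.

Lemma centers_neq0 {k} (c : 'I_k -> T) : (0 < k)%N -> centers c != set0.
Proof. by move=> k0; apply/set0Pn; exists (c (Ordinal k0)); apply: centers_mem. Qed.

Lemma card_centers_le k (c : 'I_k -> T) : (#|centers c| <= k)%N.
Proof. by apply: leq_trans (leq_imset_card _ _) _; rewrite card_ord. Qed.

Lemma cluster_dist {k} {c : 'I_k -> T} {i x} : x \in cluster rho c i ->
  distS rho x (centers c) = rho x (c i).
Proof.
rewrite inE => /forallP closest.
apply/eqP; rewrite eq_le distS_le ?andbT ?centers_mem //.
have [y /imsetP [j _ ->] ->] := distS_attained x (centers_neq0 c (leq_ltn_trans (leq0n i) (ltn_ord i))).
by have /andP[ij _] := closest j; rewrite rho_sym (rho_sym x (c j)).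
Qed.

Lemma cluster_diameter k (c : 'I_k -> T) i x y :
  x \in cluster rho c i -> y \in cluster rho c i ->
  rho x y <= distS rho x (centers c) + distS rho y (centers c).
Proof.
move=> xC yC; rewrite !(cluster_dist xC, cluster_dist yC) (rho_sym y).
exact: rho_triangle.
Qed.

Lemma cluster_disjoint k (c : 'I_k -> T) i j : i != j ->
  [disjoint cluster rho c i & cluster rho c j].
Proof.
wlog lt_ij : i j / (i < j)%N.
  move=> sym ij; have [lt|gt|/val_inj eq] := ltngtP i j; first exact: sym.
    by rewrite disjoint_sym sym // eq_sym.
  by rewrite eq eqxx in ij.
move=> _; rewrite -setI_eq0; apply/eqP/setP => x; rewrite !inE.
apply/negP => /andP[/forallP ci /forallP cj].
have /andP[le_ij _] := ci j; have /andP[_ /implyP lt_ji] := cj i.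
by move: (lt_ji lt_ij); rewrite ltNge le_ij.
Qed.

End Metric.

Section BinDivision.
Variables (R : realType) (T : finType) (rho : T -> T -> R).
Hypothesis rho_metric : is_metric rho.
Variables (z : R) (W S P : {set T}) (L : nat) (B : nat -> {set T}).
Hypothesis bins : linear_bin_division rho z W S L B.

Lemma bins_cover {x} : x \in W -> exists2 i, (1 <= i <= L)%N & x \in B i.
Proof. by case: bins => [[_ [cover _]]] _ _ _ _; apply: cover. Qed.

Lemma bins_disjoint i j : (1 <= i <= L)%N -> (1 <= j <= L)%N -> i != j ->
  [disjoint B i & B j].
Proof. by case: bins => [[_ [_ disj]]] _ _ _ _; apply: disj. Qed.

Lemma bins_sub i : (1 <= i <= L)%N -> B i \subset W.
Proof. by case: bins => [[sub _]] _ _ _ _; apply: sub. Qed.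

(* When z <= |W| condition (1) makes every bin nonempty. *)
Lemma bin_card_gt0 i : 0 < z -> z <= #|W|%:R -> (1 <= i <= L)%N -> (0 < #|B i|)%N.
Proof.
move=> z0 zW iL; case: bins => _ + _ _ _; rewrite zW => /(_ i iL) big.
by rewrite -(ltr_nat R); apply: lt_le_trans big; rewrite divr_gt0 // mulr_gt0 // ltr0n.
Qed.

(* Points of bin j+1 are farther from S than those of bin j, and bin j+1 is
   at most 3/2 times larger: so the sample in bin j+1 weighs at most 9/4 r
   times bin j, where r = |P|/|W|. *)
Lemma next_bin_sample_weight j : (1 <= j < L)%N -> (0 < #|B j|)%N ->
  well_rep R W P (B j.+1) ->
  \sum_(x in B j.+1 :&: P) distS rho x S
    <= 9/4 * (#|P|%:R / #|W|%:R) * \sum_(x in B j) distS rho x S.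
Proof.
move=> jL Bj0 /well_rep_card_ub wr; set r := #|P|%:R / #|W|%:R in wr *.
case: bins => _ _ _ /(_ j jL) growth /(_ j) farther.
have Bj0' : (0 : R) < #|B j|%:R by rewrite ltr0n.
rewrite ler_pdivrMr // in growth.
have avg := @sum_mul_card_le _ _ (B j.+1 :&: P) (B j) (fun x => distS rho x S)
  (fun x y xB yB => farther y x jL yB (subsetP (subsetIl _ _) x xB)).
move: avg; set a := \sum_(x in _ :&: _) _; set b := \sum_(x in B j) _ => avg.
have b0 : 0 <= b by apply: sumr_ge0 => x _; apply: distS_ge0.
have r0 : 0 <= r by rewrite divr_ge0.
have rb0 : 0 <= r * b by apply: mulr_ge0.
rewrite -(ler_pM2r Bj0'); nra.
Qed.

Lemma tail_sample_weight : 0 < z -> z <= #|W|%:R -> P \subset W ->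
  well_rep_bins R W P L B ->
  \sum_(x in P :\: B 1%N) distS rho x S
    <= 9/4 * (#|P|%:R / #|W|%:R) * cost rho W S.
Proof.
move=> z0 zW PW wr; have D0 x : 0 <= distS rho x S by apply: distS_ge0.
have bin_range (j : 'I_L) : (1 <= j)%N -> (1 <= j <= L)%N /\ (1 <= j.+1 <= L)%N.
  by move=> j1; have := ltn_ord j; lia.
have cover : P :\: B 1%N \subset \bigcup_(j : 'I_L | (1 <= j)%N) (B j.+1 :&: P).
  apply/subsetP => x; rewrite !inE => /andP[xB1 xP].
  have [i iL xBi] := bins_cover (subsetP PW x xP).
  have i1 : i != 1%N by apply: contraNneq xB1 => <-.
  have iL' : (i.-1 < L)%N by lia.
  apply/bigcupP; exists (Ordinal iL') => /=; first lia.
  by rewrite prednK ?inE ?xBi ?xP //; lia.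
have disj_next (j j' : 'I_L) : (1 <= j)%N -> (1 <= j')%N -> j != j' ->
    [disjoint B j.+1 :&: P & B j'.+1 :&: P].
  move=> j1 j'1 jj'; apply: disjointW (subsetIl _ _) (subsetIl _ _) _.
  by apply: bins_disjoint; [case: (bin_range j j1)|case: (bin_range j' j'1)|].
have disj (j j' : 'I_L) : (1 <= j)%N -> (1 <= j')%N -> j != j' ->
    [disjoint B j & B j'].
  move=> j1 j'1 jj'.
  by apply: bins_disjoint; [case: (bin_range j j1)|case: (bin_range j' j'1)|].
apply: le_trans (sum_le_subset D0 cover) _.
rewrite sum_disjoint_bigcup //.
have step (j : 'I_L) : (1 <= j)%N -> \sum_(x in B j.+1 :&: P) distS rho x S
    <= 9/4 * (#|P|%:R / #|W|%:R) * \sum_(x in B j) distS rho x S.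
  move=> j1; have [jL j1L] := bin_range j j1.
  by apply: next_bin_sample_weight; [lia | apply: bin_card_gt0 | apply: wr].
apply: le_trans (ler_sum _ step) _.
rewrite -mulr_sumr -sum_disjoint_bigcup //; apply: ler_wpM2l.
  by rewrite mulr_ge0 ?divr_ge0.
apply: sum_le_subset => //; apply/bigcupsP => j j1.
by apply: bins_sub; case: (bin_range j j1).
Qed.

(* By (2), the first bin holds at most 15/4 r z sample points. *)
Lemma first_bin_sample_card : W != set0 -> well_rep_bins R W P L B ->
  #|B 1%N :&: P|%:R <= 15/4 * (#|P|%:R / #|W|%:R) * z.
Proof.
move=> /set0Pn[x xW] wr; have [i iL _] := bins_cover xW.
have /well_rep_card_ub B1 : well_rep R W P (B 1%N) by apply: wr; lia.
case: bins => _ _ small _ _; apply: le_trans B1 _.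
have r0 : 0 <= #|P|%:R / #|W|%:R :> R by rewrite divr_ge0.
nra.
Qed.

End BinDivision.

Section LargeClusters.
Variables (R : realType) (T : finType) (rho : T -> T -> R).
Hypothesis rho_metric : is_metric rho.

Lemma Xlarge_eq0 k (c : 'I_k -> T) (ph : R) :
  #|T|%:R < ph -> Xlarge rho c ph = set0.
Proof.
move=> small; rewrite /Xlarge big_pred0 // => i; apply/negbTE; rewrite -ltNge.
by apply: le_lt_trans small; rewrite ler_nat max_card.
Qed.

Lemma large_clusters_cost k (c : 'I_k -> T) (ph alpha beta : R) (A Ta : {set T}) :
  0 < alpha ->
  \sum_(x in A) distS rho x (centers c) <= 9/4 * alpha * cost rho [set: T] (centers c) ->
  cost rho A Ta <= 9/2 * beta * alpha * cost rho [set: T] (centers c) ->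
  (forall i, ph <= #|cluster rho c i|%:R ->
     alpha * #|cluster rho c i|%:R <= 4 * #|cluster rho c i :&: A|%:R) ->
  cost rho (Xlarge rho c ph) Ta <= (18 * beta + 10) * cost rho [set: T] (centers c).
Proof.
move=> a0 hA hTa sample; set Del := cost rho [set: T] (centers c).
set D := fun x => distS rho x (centers c).
set K := fun i => ph <= #|cluster rho c i|%:R.
set Q := fun i => cluster rho c i :&: A.
have D0 x : 0 <= D x by apply: distS_ge0.
have disjC i j : K i -> K j -> i != j -> [disjoint cluster rho c i & cluster rho c j].
  by move=> _ _; apply: cluster_disjoint.
have disjQ i j : K i -> K j -> i != j -> [disjoint Q i & Q j].
  by move=> _ _ ij; apply: disjointW (subsetIl _ _) (subsetIl _ _) (cluster_disjoint _ _ ij).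
have per_cluster i : K i -> cost rho (cluster rho c i) Ta <= \sum_(x in cluster rho c i) D x
    + (alpha / 4)^-1 * \sum_(y in Q i) (D y + distS rho y Ta).
  move=> Ki; apply: (cost_by_sample rho_metric) => //.
  - by move=> x y xC /setIP[yC _]; apply: (cluster_diameter rho_metric xC yC).
  - by rewrite divr_gt0.
  - by rewrite mulrAC ler_pdivrMr // [_ * 4]mulrC; apply: sample.
have clusters : \sum_(x in \bigcup_(i | K i) cluster rho c i) D x <= Del.
  exact: sum_le_subset D0 (subsetT _).
have samples : \sum_(y in \bigcup_(i | K i) Q i) (D y + distS rho y Ta)
    <= 9/4 * alpha * Del + 9/2 * beta * alpha * Del.
  have QA : \bigcup_(i | K i) Q i \subset A by apply/bigcupsP => i _; apply: subsetIr.
  apply: le_trans (sum_le_subset _ QA) _; first by move=> y; rewrite addr_ge0 ?distS_ge0.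
  by rewrite big_split lerD.
rewrite /cost /Xlarge -/K sum_disjoint_bigcup //.
apply: le_trans (ler_sum _ per_cluster) _.
rewrite big_split -mulr_sumr /= -!sum_disjoint_bigcup //.
apply: le_trans (lerD clusters (ler_wpM2l _ samples)) _.
  by rewrite invr_ge0 divr_ge0 // ltW.
rewrite (_ : (alpha / 4)^-1 * _ = 9 * Del + 18 * beta * Del); last first.
  by field; apply: lt0r_neq0.
lra.
Qed.

End LargeClusters.

Theorem lemma7 (R : realType) (T : finType) (rho : T -> T -> R)
  (k : nat) (delta : R) (c : 'I_k -> T)
  (alpha beta : R) (m : nat) (P1 Ta : {set T})
  (z : R) (L : nat) (B : nat -> {set T}) :
  is_metric rho ->
  (2 <= k)%N -> 0 < delta < 1 ->
  (* OPT = {c_1,...,c_k} minimizes R(X, .) among nonempty sets of <= k points *)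
  (forall S : {set T}, S != set0 -> (#|S| <= k)%N ->
     cost rho [set: T] (centers c) <= cost rho [set: T] S) ->
  0 < alpha <= 1 / 6 ->
  alpha * #|T|%:R = m%:R ->
  #|P1| = m ->
  1 <= beta ->
  Ta \subset P1 ->
  #|Ta|%:R <= kplus k delta ->
  (forall S : {set T}, S \subset P1 -> S != set0 -> #|S|%:R <= kplus k delta ->
     cost rho P1 Ta <= beta * cost rho P1 S) ->
  z = phi k delta alpha / 15 ->
  linear_bin_division rho z [set: T] (centers c) L B ->
  trivial_bins [set: T] L B \/ well_rep_bins R [set: T] P1 L B ->
  (forall i : 'I_k, phi k delta alpha <= #|cluster rho c i|%:R ->
     well_rep R [set: T] P1 (cluster rho c i)) ->
  cost rho (Xlarge rho c (phi k delta alpha)) Ta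
    <= (18 * beta + 10) * cost rho [set: T] (centers c).
Proof.
move=> hm k2 delta01 _ /andP[a0 _] han hP1 b1 _ _ Tamin hz bins hbins hclus.
set ph := phi k delta alpha in hz hclus *; set Del := cost rho [set: T] (centers c).
have lnpos := log_term_gt0 k2 delta01.
have php : 0 < ph by rewrite divr_gt0 // mulr_gt0.
have [small|big] := ltP (#|T|%:R) ph.
  rewrite Xlarge_eq0 // /cost big_set0 mulr_ge0 ?(cost_ge0 hm) //; lra.
have npos : (0 < #|T|)%N by rewrite -(ltr_nat R); apply: lt_le_trans big.
have rate : #|P1|%:R / #|[set: T]|%:R = alpha.
  by rewrite cardsT hP1 -han mulfK // pnatr_eq0 -lt0n.
have z0 : 0 < z by rewrite hz divr_gt0.
have zW : z <= #|[set: T]|%:R by rewrite cardsT hz; lra.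
(* Otherwise condition (2) rules out the trivial bin division. *)
have wr : well_rep_bins R [set: T] P1 L B.
  case: hbins => // [[_ B1T]]; case: bins => _ _ + _ _.
  by rewrite B1T cardsT hz; lra.
have B1 : #|B 1%N :&: P1|%:R <= alpha * ph / 4.
  have W0 : [set: T] != set0 by rewrite -card_gt0 cardsT.
  by have := first_bin_sample_card bins W0 wr; rewrite rate hz; lra.
have tail := tail_sample_weight hm bins z0 zW (subsetT P1) wr; rewrite rate -/Del in tail.
have P1ne : P1 != set0 by rewrite -card_gt0 hP1 -(ltr_nat R) -han mulr_gt0 // ltr0n.
have [S [SP1 S0 Scard Scost]] := seeded_solution hm (B 1%N) P1ne (centers_neq0 c (ltnW k2)).
have hTa : cost rho P1 Ta <= 9/2 * beta * alpha * Del.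
  apply: le_trans (Tamin S SP1 S0 _) _.
    apply: (card_le_kplus a0 lnpos (leq_trans Scard _) B1).
    by rewrite leq_add2r card_centers_le.
  have SDel : cost rho P1 S <= 9/2 * alpha * Del by lra.
  by have := ler_wpM2l (le_trans ler01 b1) SDel; lra.
apply: (large_clusters_cost hm a0 tail (le_trans (cost_le_subset hm _ (subsetDl _ _)) hTa)).
move=> i large; rewrite -{1}rate; apply: well_rep_sample_outside (hclus i large) _.
by rewrite rate; nra.
Qed.
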